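(* For every nonzero $a\in\mathcal F^0(\mathbb Z,\bar K)$ there exists an integer $m_a>0$, depending only on $a$, such that every function $f:\mathbb Z\to\bar K$ with $f*a=0$ is $m_a$-periodic. Consequently $\ker(\Delta_a)$ is contained in the space of $m_a\mathbb Z$-periodic functions on $\mathbb Z$ and is finite dimensional.
   Context: $K=\mathrm{GF}(p^r)$, $\bar K$ an algebraic closure. $\mathcal F^0(\mathbb Z,\bar K)$ is the space of finitely supported functions $\mathbb Z\to\bar K$; $(f*a)(n)=\sum_{k}f(k)a(n-k)$; $\Delta_af=f*a$ on all functions $\mathbb Z\to\bar K$. *)

From HB Require Import structures.
From mathcomp Require Import all_boot all_order all_algebra.
Set Implicit Arguments. Unset Strict Implicit. Unset Printing Implicit Defensive.
Import Order.TTheory GRing.Theory Num.Theory.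
Local Open Scope ring_scope.

(* L is an algebraic closure of the finite field K (K = GF(p^r)) via iota:
   L is algebraically closed and every element of L is algebraic over iota(K). *)
Definition is_alg_closure_of (K : finFieldType) (L : closedFieldType)
  (iota : {rmorphism K -> L}) : Prop :=
  forall x : L, exists q : {poly K}, q != 0 /\ root (map_poly iota q) x.

Definition supp_in (L : nzRingType) (N : nat) (a : int -> L) : Prop :=
  forall j : int, (N < `|j|)%N -> a j = 0.

(* convolution (f * a)(n) = sum_k f(k) a(n-k) = sum_{j} f(n-j) a(j),
   computed for a supported in [-N, N] (then independent of N). *)
Definition conv (L : nzRingType) (N : nat) (f a : int -> L) (n : int) : L :=
  \sum_(i < (N + N).+1) f (n - (i%:Z - N%:Z)) * a (i%:Z - N%:Z).

Definition in_ker_Delta (L : nzRingType) (N : nat) (a f : int -> L) : Prop :=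
  forall n : int, conv N f a n = 0.

Definition periodic (L : Type) (m : nat) (f : int -> L) : Prop :=
  forall n : int, f (n + m%:Z) = f n.

(* Let a (l - N) be the lowest nonzero value of a.  Dividing the equation
   f * a = 0 by it shows that every f in the kernel solves a linear recurrence
   of order N + N - l, whose companion matrix M shifts the window of the last
   N + N - l values of f one step forward.  The values of a are algebraic over
   the finite field K, hence all fixed by one iterate x |-> x ^+ p ^ E of the
   Frobenius map; so the entries of every power of M are roots of
   'X^(p ^ E) - 'X, only finitely many powers of M exist, M ^+ i = M ^+ j for
   some i < j, and every solution is (j - i)-periodic.  A periodic kernel
   element is determined by its values on [0, m), and evaluation there embeds
   the kernel into L^m, which gives a finite spanning family. *)

From HB Require Import structures.
From Stdlib Require Import Classical.
From mathcomp Require Import all_boot all_order all_algebra all_field zify.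
Import Order.TTheory GRing.Theory Num.Theory.
Set Implicit Arguments. Unset Strict Implicit. Unset Printing Implicit Defensive.
Local Open Scope ring_scope.

Section FixedPoints.
Variables (F : fieldType) (f : {rmorphism F -> F}).

Definition fixed_points : {pred F} := [pred x | f x == x].

Fact fixed_points_divring_closed : divring_closed fixed_points.
Proof.
split=> [|x y|x y]; rewrite !inE ?rmorph1 // => /eqP fx /eqP fy.
  by rewrite rmorphB fx fy.
by rewrite fmorph_div fx fy.
Qed.

HB.instance Definition _ :=
  GRing.isDivringClosed.Build F fixed_points fixed_points_divring_closed.

End FixedPoints.

Section IteratedFrobenius.
Variables (F : fieldType) (p : nat) (pF : p \in [pchar F]).

Definition pFrobenius_iter (e : nat) : F -> F := iter e (pFrobenius_aut pF).

Fact pFrobenius_iter_is_nmod_morphism e : nmod_morphism (pFrobenius_iter e).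
Proof. by split=> [|x y]; elim: e => //= e ->; rewrite ?rmorph0 ?rmorphD. Qed.

Fact pFrobenius_iter_is_monoid_morphism e : monoid_morphism (pFrobenius_iter e).
Proof. by split=> [|x y]; elim: e => //= e ->; rewrite ?rmorph1 ?rmorphM. Qed.

HB.instance Definition _ e := GRing.isNmodMorphism.Build F F (pFrobenius_iter e)
  (pFrobenius_iter_is_nmod_morphism e).
HB.instance Definition _ e := GRing.isMonoidMorphism.Build F F (pFrobenius_iter e)
  (pFrobenius_iter_is_monoid_morphism e).

Lemma pFrobenius_iterE e x : pFrobenius_iter e x = x ^+ (p ^ e).
Proof.
elim: e => [|e IH]; first by rewrite expn0 expr1.
by rewrite /= IH pFrobenius_autE -exprM -expnSr.
Qed.

Lemma pFrobenius_iter_fixedM e k x :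
  x \in fixed_points (pFrobenius_iter e) ->
  x \in fixed_points (pFrobenius_iter (e * k)%N).
Proof.
rewrite !inE => /eqP fx; apply/eqP.
by rewrite /= /pFrobenius_iter mulnC iterM iter_fix.
Qed.

End IteratedFrobenius.

Lemma pigeonhole (T : finType) (g : nat -> T) : exists i j, (i < j)%N /\ g i = g j.
Proof.
have /injectivePn [[i ?] [[j ?] ne_ij eq_g]] :
    ~~ injectiveb (fun k : 'I_#|T|.+1 => g k).
  by apply/injectiveP => /leq_card; rewrite card_ord ltnn.
case: (ltngtP i j) => [lt_ij | lt_ji | eq_ij]; first by exists i, j.
  by exists j, i.
by case/eqP: ne_ij; apply: val_inj.
Qed.

Lemma seq_pigeonhole (T : choiceType) (s : seq T) (g : nat -> T) :
  (forall k, g k \in s) -> exists i j, (i < j)%N /\ g i = g j.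
Proof.
move=> gs; have [i [j [lt_ij /(congr1 val) eq_g]]] :=
  pigeonhole (fun k => SeqSub (gs k) : seq_sub s).
by exists i, j.
Qed.

Lemma mx_pigeonhole (T : choiceType) (s : seq T) m n (g : nat -> 'M[T]_(m, n)) :
  (forall k i j, g k i j \in s) -> exists i j, (i < j)%N /\ g i = g j.
Proof.
move=> gs; have [i [j [lt_ij eq_g]]] :=
  pigeonhole (fun k => \matrix_(i, j) (SeqSub (gs k i j) : seq_sub s)).
exists i, j; split=> //; apply/matrixP => i' j'.
by have := congr1 (fun A : 'M_(m, n) => val (A i' j')) eq_g; rewrite !mxE.
Qed.

Lemma roots_in_seq (L : closedFieldType) (P : {poly L}) :
  P != 0 -> exists rs : seq L, forall x, root P x -> x \in rs.
Proof.
move=> P0; have [rs Prs] := closed_field_poly_normal P.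
by exists rs => x; rewrite {1}Prs rootZ ?lead_coef_eq0 // root_prod_XsubC.
Qed.

Lemma pFrobenius_fixed_finite (L : closedFieldType) p (pL : p \in [pchar L]) E :
  (0 < E)%N -> exists rs : seq L, {subset fixed_points (pFrobenius_iter pL E) <= rs}.
Proof.
move=> E_gt0; have p_gt1 := prime_gt1 (pcharf_prime pL).
have q_gt1 : (1 < p ^ E)%N by rewrite -(expn0 p) ltn_exp2l.
have P0 : 'X^(p ^ E) - 'X != 0 :> {poly L}.
  by rewrite -size_poly_eq0 size_polyDl size_polyXn // size_polyN size_polyX ltnS.
have [rs rsP] := roots_in_seq P0; exists rs => x.
rewrite inE /= pFrobenius_iterE => /eqP xE.
by apply: rsP; rewrite rootE !hornerE xE subrr.
Qed.

Lemma pFrobenius_fixed_common (F : fieldType) p (pF : p \in [pchar F]) (xs : seq F) :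
  {in xs, forall x, exists2 e, (0 < e)%N & x \in fixed_points (pFrobenius_iter pF e)} ->
  exists2 E, (0 < E)%N & {subset xs <= fixed_points (pFrobenius_iter pF E)}.
Proof.
elim: xs => [|y xs IH] xsP; first by exists 1%N.
have [e e_gt0 ye] := xsP y (mem_head _ _).
have [E E_gt0 xsE] := IH (fun x xxs => xsP x (mem_behead (s := y :: xs) xxs)).
exists (E * e)%N => [|x]; first by rewrite muln_gt0 E_gt0.
rewrite inE => /predU1P [->|/xsE]; last exact: pFrobenius_iter_fixedM.
by rewrite mulnC; apply: pFrobenius_iter_fixedM.
Qed.

Lemma algebraic_pFrobenius_fixed (K : finFieldType) (L : closedFieldType)
    (iota : {rmorphism K -> L}) p (pK : p \in [pchar K]) x :
  (exists q : {poly K}, q != 0 /\ root (map_poly iota q) x) ->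
  exists2 e, (0 < e)%N & x \in fixed_points (pFrobenius_iter (rmorph_pchar iota pK) e).
Proof.
case=> q [q0 qx]; set P := map_poly iota q.
set n := logn p #|K|; set g := pFrobenius_iter (rmorph_pchar iota pK) n.
have n_gt0 : (0 < n)%N.
  rewrite lt0n; apply: contraTneq (finNzRing_gt1 K) => n0.
  by rewrite (card_pprimeChar pK) -/n n0.
have gP : map_poly g P = P.
  apply/polyP => i; rewrite coef_map /= coef_map /= /g pFrobenius_iterE.
  by rewrite -rmorphXn -(card_pprimeChar pK) expf_card.
have root_g y : root P y -> root P (g y).
  by move=> /eqP Py; rewrite /root -gP horner_map Py rmorph0.
have P0 : P != 0 by rewrite map_poly_eq0.
have [rs rsP] := roots_in_seq P0.
have [i [j [lt_ij eq_ij]]] := seq_pigeonhole (g := fun k => iter k g x)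
  (fun k => rsP _ (iter_in k root_g qx)).
exists ((j - i) * n)%N; first by rewrite muln_gt0 subn_gt0 lt_ij.
have inj_g k : injective (iter k g).
  by elim: k => [|k IH] y z //= /fmorph_inj /IH.
rewrite inE /= /pFrobenius_iter iterM -/g; apply/eqP/(inj_g i).
by rewrite -iterD subnKC ?(ltnW lt_ij).
Qed.

Lemma periodic_addMz (T : Type) m (f : int -> T) :
  periodic m f -> forall x (k : int), f (x + k * m%:Z) = f x.
Proof.
move=> fm x k; have fn y (n : nat) : f (y + n%:Z * m%:Z) = f y.
  elim: n => [|n IH]; first by rewrite mul0r addr0.
  by rewrite -{}IH -[RHS]fm; congr f; lia.
case: k => n; first exact: fn.
by rewrite -(fn _ n.+1); congr f; lia.
Qed.

Lemma periodic_eq (T : Type) m (f g : int -> T) : (0 < m)%N ->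
  periodic m f -> periodic m g -> (forall k : 'I_m, f k%:Z = g k%:Z) -> f =1 g.
Proof.
move=> m_gt0 fm gm fg n; have m0 : m%:Z != 0 by rewrite eqz_nat -lt0n.
rewrite (divz_eq n m) addrC !periodic_addMz //.
have lt_nm : (`|(n %% m)%Z| < m)%N.
  by rewrite -ltz_nat abszE ger0_norm ?ltz_pmod ?modz_ge0.
by have := fg (Ordinal lt_nm); rewrite /= abszE ger0_norm ?modz_ge0.
Qed.

Section LinearRecurrence.
Variables (R : pzSemiRingType) (T : nat) (c : nat -> R).

Definition solves_recurrence (f : int -> R) :=
  forall u, f u = \sum_(t < T) f (u - 1 - t%:Z) * c t.

Definition companion_mx : 'M[R]_T :=
  \matrix_(i, j) if j == 0 :> nat then c i else (i.+1 == j)%:R.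

Definition recurrence_state (f : int -> R) (k : int) : 'rV[R]_T :=
  \row_(i < T) f (k - 1 - i%:Z).

Variables (f : int -> R) (f_rec : solves_recurrence f).

Lemma recurrence_stateS k :
  recurrence_state f (k + 1) = recurrence_state f k *m companion_mx.
Proof.
apply/rowP => -[[|j] lt_jT]; rewrite /recurrence_state /companion_mx !mxE /=.
  rewrite addrK subr0 f_rec; apply: eq_bigr => i _; rewrite !mxE //.
rewrite (bigD1 (Ordinal (ltnW lt_jT))) //= big1 => [|i ne_ij].
  by rewrite !mxE eqxx mulr1 addr0 /=; congr f; lia.
rewrite !mxE /= eqSS; case: eqP => [eq_ij|]; last by rewrite mulr0.
by case/eqP: ne_ij; apply: val_inj.
Qed.

Lemma recurrence_stateD k (n : nat) :
  recurrence_state f (k + n%:Z) = recurrence_state f k *m companion_mx ^+ n.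
Proof.
elim: n => [|n IH]; first by rewrite addr0 expr0 mulmx1.
have -> : k + n.+1%:Z = k + n%:Z + 1 by rewrite -addrA -PoszD addn1.
by rewrite recurrence_stateS IH exprSr mulmxA.
Qed.

Lemma recurrence_periodic i j : (i < j)%N ->
  companion_mx ^+ i = companion_mx ^+ j -> periodic (j - i) f.
Proof.
move=> lt_ij eq_ij n.
have fE u : f u = \sum_(t < T) recurrence_state f u 0 t * c t.
  by rewrite f_rec; apply: eq_bigr => t _; rewrite mxE.
rewrite fE [in RHS]fE.
have -> : n = (n - i%:Z) + i%:Z by rewrite subrK.
by rewrite -addrA -PoszD subnKC ?(ltnW lt_ij) // !recurrence_stateD eq_ij.
Qed.

End LinearRecurrence.

Lemma exists_lowest_support (L : nzRingType) N (a : int -> L) :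
  supp_in N a -> (exists j, a j != 0) ->
  exists l, [/\ (l <= N + N)%N, a (l%:Z - N%:Z) != 0
              & forall i, (i < l)%N -> a (i%:Z - N%:Z) = 0].
Proof.
move=> a_supp [j aj]; have : exists i, a (i%:Z - N%:Z) != 0.
  have le_jN : ~~ (N < `|j|)%N by apply: contra aj => /a_supp ->.
  by exists (absz (j + N%:Z)); have -> : (absz (j + N%:Z))%:Z - N%:Z = j by lia.
case/ex_minnP => l al l_min; exists l; split=> // [|i lt_il].
  rewrite leqNgt; apply: contra al => lt_Nl; apply/eqP/a_supp; lia.
by apply/eqP; apply: contraTT lt_il => ai; rewrite -leqNgt l_min.
Qed.

Section ConvolutionRecurrence.
Variables (L : fieldType) (N : nat) (a : int -> L) (l : nat).
Hypotheses (le_l : (l <= N + N)%N) (al : a (l%:Z - N%:Z) != 0).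
Hypothesis a_lt_l : forall i, (i < l)%N -> a (i%:Z - N%:Z) = 0.

Definition conv_coef (t : nat) : L := - a ((l + t.+1)%:Z - N%:Z) / a (l%:Z - N%:Z).

Lemma conv_from_lowest f n : conv N f a n =
  \sum_(t < (N + N - l).+1) f (n + N%:Z - (l + t)%:Z) * a ((l + t)%:Z - N%:Z).
Proof.
rewrite /conv -(big_mkord xpredT (fun i => f (n - (i%:Z - N%:Z)) * a (i%:Z - N%:Z))).
rewrite (@big_cat_nat _ _ _ l) ?leqW //= big_nat_cond big1 ?add0r => [|i].
  rewrite (big_addn 0 _ l) subSn // big_mkord; apply: eq_bigr => i _.
  by rewrite addnC; congr (f _ * a _); lia.
by case/andP=> /andP[_ lt_il] _; rewrite a_lt_l ?mulr0.
Qed.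

Lemma ker_Delta_solves_recurrence f :
  in_ker_Delta N a f -> solves_recurrence (N + N - l) conv_coef f.
Proof.
move=> f_ker u; have := f_ker (u - N%:Z + l%:Z).
rewrite conv_from_lowest big_ord_recl /= addn0 => /eqP; rewrite addr_eq0 => /eqP.
have -> : u - N%:Z + l%:Z + N%:Z - l%:Z = u by lia.
move/(canRL (mulfK al)) => ->.
rewrite mulNr mulr_suml -sumrN; apply: eq_bigr => t _.
by rewrite /conv_coef mulNr mulrN mulrA /bump /=; congr (- (f _ * _ / _)); lia.
Qed.

End ConvolutionRecurrence.

Lemma conv_sub (L : nzRingType) N (a f g : int -> L) n :
  conv N (fun x => f x - g x) a n = conv N f a n - conv N g a n.
Proof. by rewrite /conv -sumrB; apply: eq_bigr => i _; rewrite mulrBl. Qed.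

Lemma conv_lincomb (L : comNzRingType) N (a : int -> L) d (g : 'I_d -> int -> L) c n :
  conv N (fun x => \sum_(i < d) c i * g i x) a n = \sum_(i < d) c i * conv N (g i) a n.
Proof.
rewrite /conv; under eq_bigr => k _ do rewrite mulr_suml.
rewrite exchange_big; apply: eq_bigr => i _; rewrite mulr_sumr.
by apply: eq_bigr => k _; rewrite mulrA.
Qed.

Section FiniteSpan.
Variables (X : Type) (L : fieldType) (S : (X -> L) -> Prop) (m : nat) (x : 'I_m -> X).

Definition eval_row (f : X -> L) : 'rV[L]_m := \row_k f (x k).
Definition eval_mx d (g : 'I_d -> X -> L) : 'M[L]_(d, m) := \matrix_(i, k) g i (x k).

Lemma eval_rows_spanned r d (g : 'I_d -> X -> L) :
  (forall i, S (g i)) -> (m - \rank (eval_mx g) <= r)%N ->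
  exists d' (g' : 'I_d' -> X -> L),
    (forall i, S (g' i)) /\ forall f, S f -> (eval_row f <= eval_mx g')%MS.
Proof.
(* Induct on the corank: a function whose evaluation row is not yet spanned
   joins the family and raises the rank. *)
elim: r d g => [|r IH] d g Sg rk_g.
  exists d, g; split=> // f _; apply: submx_full.
  by rewrite /row_full eqn_leq rank_leq_col -subn_eq0 -leqn0.
case: (classic (forall f, S f -> (eval_row f <= eval_mx g)%MS)) => [spans|].
  by exists d, g.
move=> not_spans.
have [f Sf not_sub] : exists2 f, S f & ~~ (eval_row f <= eval_mx g)%MS.
  apply: NNPP => none; apply: not_spans => f Sf.
  by apply/negPn/negP => not_sub; apply: none; exists f.
pose g' (i : 'I_d.+1) := if unlift ord_max i is Some i' then g i' else f.
have Sg' i : S (g' i) by rewrite /g'; case: (unlift ord_max i).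
apply: (IH d.+1 g' Sg').
have lt_g : (eval_mx g < eval_mx g')%MS.
  rewrite ltmxE; apply/andP; split.
    apply/row_subP => i; rewrite (_ : row i _ = row (lift ord_max i) (eval_mx g')).
      exact: row_sub.
    by apply/rowP => k; rewrite !mxE /g' liftK.
  apply: contra not_sub => /(submx_trans (row_sub ord_max _)).
  rewrite (_ : row _ _ = eval_row f) //.
  by apply/rowP => k; rewrite !mxE /g' unlift_none.
by have := rank_ltmx lt_g; have := rank_leq_col (eval_mx g'); lia.
Qed.

Hypothesis S_sub : forall f g, S f -> S g -> S (fun y => f y - g y).
Hypothesis S_lincomb : forall d (g : 'I_d -> X -> L) (c : 'I_d -> L),
  (forall i, S (g i)) -> S (fun y => \sum_(i < d) c i * g i y).
Hypothesis S_determined : forall f, S f -> (forall k, f (x k) = 0) -> forall y, f y = 0.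

Lemma finitely_spanned : exists d (g : 'I_d -> X -> L), (forall i, S (g i)) /\
  forall f, S f -> exists c : 'I_d -> L, forall y, f y = \sum_(i < d) c i * g i y.
Proof.
have S0 (i : 'I_0) : S (fun _ => 0) by case: i.
have [d [g [Sg spans]]] := eval_rows_spanned S0 (leq_subr _ m).
exists d, g; split=> // f Sf; have /submxP [D eqD] := spans f Sf.
exists (D 0) => y; apply/eqP; rewrite -subr_eq0; apply/eqP.
apply: (S_determined (S_sub Sf (S_lincomb (D 0) Sg))) => k.
have := congr1 (fun v : 'rV_m => v 0 k) eqD; rewrite !mxE => ->.
by apply/eqP; rewrite subr_eq0; apply/eqP/eq_bigr => i _; rewrite mxE.
Qed.

End FiniteSpan.

Lemma ker_Delta_periodic (K : finFieldType) (L : closedFieldType)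
    (iota : {rmorphism K -> L}) (Halg : is_alg_closure_of iota)
    N (a : int -> L) (Ha : supp_in N a) (Hnz : exists j, a j != 0) :
  exists2 m, (0 < m)%N & forall f, in_ker_Delta N a f -> periodic m f.
Proof.
have [p _ pK] := finPcharP K; pose pL := rmorph_pchar iota pK.
have [l [le_l al a_lt_l]] := exists_lowest_support Ha Hnz.
pose vals := [seq a (i%:Z - N%:Z) | i <- seq.iota 0 (N + N).+1].
have [E E_gt0 valsE] := @pFrobenius_fixed_common _ _ pL vals
  (fun x _ => algebraic_pFrobenius_fixed pK (Halg x)).
pose M := companion_mx (N + N - l) (conv_coef N a l).
have M_fixed : M \is a mxOver (fixed_points (pFrobenius_iter pL E)).
  apply/mxOverP => i j; rewrite mxE; case: eqP => _; last exact: rpred_nat.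
  have val_fixed k : (k <= N + N)%N ->
      a (k%:Z - N%:Z) \in fixed_points (pFrobenius_iter pL E).
    by move=> le_kN; apply/valsE/map_f; rewrite mem_iota.
  by rewrite /conv_coef rpred_div ?rpredN ?val_fixed //; have := ltn_ord i; lia.
have [rs rsP] := pFrobenius_fixed_finite pL E_gt0.
have [i [j [lt_ij eq_ij]]] := mx_pigeonhole (g := fun k => M ^+ k)
  (fun k i j => rsP _ (mxOverP (rpredX k M_fixed) i j)).
exists (j - i)%N; first by rewrite subn_gt0.
by move=> f /(ker_Delta_solves_recurrence le_l al a_lt_l) /recurrence_periodic; apply.
Qed.

Theorem lemma5p6 (K : finFieldType) (L : closedFieldType)
  (iota : {rmorphism K -> L}) (Halg : is_alg_closure_of iota)
  (N : nat) (a : int -> L) (Ha : supp_in N a) (Hnz : exists j, a j != 0) :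
  exists m : nat, (0 < m)%N /\
    (forall f : int -> L, in_ker_Delta N a f -> periodic m f) /\
    (exists (d : nat) (g : 'I_d -> int -> L),
        (forall i, in_ker_Delta N a (g i)) /\
        forall f : int -> L, in_ker_Delta N a f ->
          exists c : 'I_d -> L, forall n : int, f n = \sum_(i < d) c i * g i n).
Proof.
have [m m_gt0 ker_periodic] := ker_Delta_periodic Halg Ha Hnz.
exists m; split=> //; split=> //.
apply: (finitely_spanned (x := fun k : 'I_m => k%:Z)).
- by move=> f g f_ker g_ker n; rewrite conv_sub f_ker g_ker subrr.
- move=> d g c g_ker n; rewrite conv_lincomb big1 // => i _.
  by rewrite g_ker mulr0.
- by move=> f f_ker f0; apply: (periodic_eq m_gt0 (ker_periodic f f_ker)).
Qed.
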